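(* Assume (B1)–(B3) and consider the NL-IAPIAL method described in the context. For every $k\ge1$ at which $p_k$ is computed, $$\mathcal L_{c_k}(z_k;p_k)\le\mathcal L_{c_k}(z_k;p_{k-1})+\frac1{c_k}\|p_k-p_{k-1}\|^2,$$ $$\mathcal L_{c_k}(z_k;p_k)\le\mathcal L_{c_k}(z_{k-1};p_{k-1})-\Big(\frac{1-\sigma^2}{2\lambda}\Big)\|r_k\|^2+\frac1{c_k}\|p_k-p_{k-1}\|^2.$$
   Context: $\mathcal K\subseteq\mathbb{R}^\ell$ is a nonempty closed convex cone, $\mathcal K^*=\{y:\langle y,x\rangle\ge0\ \forall x\in\mathcal K\}$ its dual cone, $u\preceq_{\mathcal K}v$ means $v-u\in\mathcal K$, $\Pi_S$ is the Euclidean projection onto a closed convex set $S$, $\mathrm{dist}(y,S)$ the Euclidean distance. $\partial_\varepsilon\varphi(z):=\{u:\varphi(z')\ge\varphi(z)+\langle u,z'-z\rangle-\varepsilon\ \forall z'\}$, $\partial=\partial_0$. For differentiable $g:\mathbb{R}^n\to\mathbb{R}^\ell$, $\nabla g(z)\in\mathbb{R}^{n\times\ell}$ is the transpose of the Jacobian. $g$ is $\mathcal K$-convex if $g(tz'+(1-t)z)-tg(z')-(1-t)g(z)\preceq_{\mathcal K}0$ for all $z,z'$, $t\in[0,1]$. (B1) $h:\mathbb{R}^n\to(-\infty,\infty]$ proper lsc convex, $K_h$-Lipschitz on its domain; $\mathcal H:=\mathrm{dom}\,h$ compact with diameter $D_h$. (B2) $f$ differentiable on an open set containing $\mathcal H$;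 $m_f,L_f>0$ with $f(z')-f(z)-\langle\nabla f(z),z'-z\rangle\ge-\frac{m_f}{2}\|z'-z\|^2$ and $\|\nabla f(z')-\nabla f(z)\|\le L_f\|z'-z\|$ on $\mathcal H$. (B3) $g$ is $\mathcal K$-convex, differentiable, $\nabla g$ is $L_g$-Lipschitz on $\mathbb{R}^n$. (B4) there exist $\bar z\in\mathrm{int}\,\mathcal H$, $\tau\in(0,1]$ with $g(\bar z)\preceq_{\mathcal K}0$ and $\max\{\|\nabla g(z)p\|,|\langle p,g(\bar z)\rangle|\}\ge\tau\|p\|$ for all $z\in\mathcal H$, $p\in\mathcal K^*$. Constants: $B_f^{(1)}:=\sup_{\mathcal H}\|\nabla f\|$, $B_g^{(0)}:=\sup_{\mathcal H}\|g\|$, $B_g^{(1)}:=\sup_{\mathcal H}\|\nabla g\|$. Functions: $\phi=f+h$; $\mathcal L_c(z;p):=f(z)+h(z)+\frac1{2c}[\mathrm{dist}^2(p+cg(z),-\mathcal K)-\|p\|^2]$; $\widetilde{\mathcal L}_c(z;p):=\mathcal L_c(z;p)-h(z)$, with $\nabla_z\widetilde{\mathcal L}_c(z;p)=\nabla f(z)+\nabla g(z)\Pi_{\mathcal K^*}(p+cg(z))$; $\Lambda(c,p):=L_f+L_g\|p\|+c(B_g^{(0)}L_g+[B_g^{(1)}]^2)$. NL-IAPIAL method. Inputs: $\lambda\in(0,1/(2m_f)]$, $\sigma\in(0,1/\sqrt2]$, $c_1>0$, $(z_0,p_0)\in\mathcal H\times\mathbb{R}^\ell$, $(\hat\rho,\hat\eta)\in\mathbb{R}^2_{++}$.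 Set $\hat k=0$, $k=1$. Iteration $k$: (1) set $L^\psi_{k-1}:=\lambda\Lambda(c_k,p_{k-1})+1$, $\sigma_{k-1}:=\sigma/\sqrt{L^\psi_{k-1}}$, and obtain (by any procedure) $(z_k,v_k,\varepsilon_k)\in\mathbb{R}^n\times\mathbb{R}^n\times\mathbb{R}_+$ with $v_k\in\partial_{\varepsilon_k}(\lambda\mathcal L_{c_k}(\cdot;p_{k-1})+\frac12\|\cdot-z_{k-1}\|^2)(z_k)$ and $\|v_k\|^2+2\varepsilon_k\le\sigma_{k-1}^2\|v_k+z_{k-1}-z_k\|^2$. (2) Set $r_k:=v_k+z_{k-1}-z_k$, $\delta_k:=\varepsilon_k/\lambda$, $\hat z_k:=\mathrm{argmin}_u\{\lambda[\langle\nabla_z\widetilde{\mathcal L}_{c_k}(z_k;p_{k-1}),u-z_k\rangle+h(u)]-\langle r_k,u-z_k\rangle+\frac{L^\psi_{k-1}}2\|u-z_k\|^2\}$, $w_k:=\frac1\lambda[r_k+L^\psi_{k-1}(z_k-\hat z_k)]$, $\hat p_k:=\Pi_{\mathcal K^*}(p_{k-1}+c_kg(\hat z_k))$, $\hat q_k:=(p_{k-1}-\hat p_k)/c_k$, $\hat w_k:=w_k+\nabla_z\widetilde{\mathcal L}_{c_k}(\hat z_k;p_{k-1})-\nabla_z\widetilde{\mathcal L}_{c_k}(z_k;p_{k-1})$; if $\|\hat w_k\|\le\hat\rho$ and $\|\hat q_k\|\le\hat\eta$, stop. (3) $p_k:=\Pi_{\mathcal K^*}(p_{k-1}+c_kg(z_k))$.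 (4) If $k>\hat k+1$ and $\Delta_k:=\frac{1}{k-\hat k-1}[\mathcal L_{c_k}(z_{\hat k+1};p_{\hat k+1})-\mathcal L_{c_k}(z_k;p_k)]\le\frac{\lambda(1-\sigma^2)\hat\rho^2}{4(1+2\sigma)^2}$, set $c_{k+1}=2c_k$ and $\hat k=k$; otherwise $c_{k+1}=c_k$. (5) $k\leftarrow k+1$. *)

From HB Require Import structures.
From mathcomp Require Import all_boot all_order all_algebra.
From mathcomp Require Import all_classical all_reals all_analysis.
Set Implicit Arguments. Unset Strict Implicit. Unset Printing Implicit Defensive.
Import Order.TTheory GRing.Theory Num.Theory numFieldNormedType.Exports.
Local Open Scope classical_set_scope.
Local Open Scope ring_scope.

Section Defs.
Variable R : realType.

Definition dotv {n : nat} (u v : 'cV[R]_n) : R := (u^T *m v) 0 0.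
Definition norm2 {n : nat} (u : 'cV[R]_n) : R := Num.sqrt (dotv u u).

Definition opnorm {k m : nat} (M : 'M[R]_(k, m)) : R :=
  sup [set norm2 (M *m x) | x in [set x : 'cV[R]_m | norm2 x <= 1]].

Definition distv {n : nat} (y : 'cV[R]_n) (S : set 'cV[R]_n) : R :=
  inf [set norm2 (y - x) | x in S].

(* Euclidean projection onto S (the nearest point; well defined and unique
   for nonempty closed convex S). *)
Definition proj_set {n : nat} (S : set 'cV[R]_n) (y : 'cV[R]_n) : 'cV[R]_n :=
  xget 0 [set x | S x /\ forall z, S z -> norm2 (y - x) <= norm2 (y - z)].

Definition convex_setv {n : nat} (S : set 'cV[R]_n) : Prop :=
  forall x y (t : R), S x -> S y -> 0 <= t <= 1 -> S (t *: x + (1 - t) *: y).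

Definition closed_convex_cone {n : nat} (K : set 'cV[R]_n) : Prop :=
  K !=set0 /\ closed K /\ convex_setv K /\
  (forall (t : R) x, 0 <= t -> K x -> K (t *: x)).

Definition dual_cone {n : nat} (K : set 'cV[R]_n) : set 'cV[R]_n :=
  [set y | forall x, K x -> 0 <= dotv y x].

Definition neg_set {n : nat} (K : set 'cV[R]_n) : set 'cV[R]_n :=
  [set - x | x in K].

Definition cone_le {n : nat} (K : set 'cV[R]_n) (u v : 'cV[R]_n) : Prop := K (v - u).

Definition ext_on {n : nat} (D : set 'cV[R]_n) (phi : 'cV[R]_n -> R)
  (z : 'cV[R]_n) : \bar R := if `[< D z >] then (phi z)%:E else +oo%E.

(* eps-subdifferential of the extended-valued function (phi on D, +oo off D):
   v \in \partial_eps phi(z). Since D is nonempty this forces z \in D; for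
   z' outside D the defining inequality holds trivially (+oo >= ...). *)
Definition esubdiff {n : nat} (D : set 'cV[R]_n) (phi : 'cV[R]_n -> R)
  (eps : R) (z v : 'cV[R]_n) : Prop :=
  D z /\ forall z', D z' -> phi z' >= phi z + dotv v (z' - z) - eps.

Definition Lag {n l : nat} (K : set 'cV[R]_l) (f h : 'cV[R]_n -> R)
  (g : 'cV[R]_n -> 'cV[R]_l) (c : R) (z : 'cV[R]_n) (p : 'cV[R]_l) : R :=
  f z + h z + (2 * c)^-1 * ((distv (p + c *: g z) (neg_set K)) ^+ 2 - (norm2 p) ^+ 2).

End Defs.

From HB Require Import structures.
From mathcomp Require Import all_boot all_order all_algebra.
From mathcomp Require Import all_classical all_reals all_analysis.
From mathcomp Require Import ring lra.
Import Order.TTheory GRing.Theory Num.Theory numFieldNormedType.Exports.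
Local Open Scope classical_set_scope.
Local Open Scope ring_scope.

(* For [y = p + c g z] and [p' = proj_{K^*} y], the
      Moreau decomposition gives [p' - y \in K] and [<y - p', p'> = 0]; hence
      [dist(y, -K) >= |p'|] and [dist(p' + c g z, -K) <= |2 p' - p|], which
      yield [L_c(z;p') <= L_c(z;p) + |p' - p|^2 / c].  The decomposition is
      proved from scratch: a point [u0] of the closed cone [K] nearest to [-y]
      exists by compactness, [y + u0] is then a nearest point of [K^*], and
      nearest points of the convex set [K^*] are unique.
   2. Primal step.  The inexact proximal condition of step (1), tested at the
      previous iterate, gives the decrease
      [L_c(z_k;p_{k-1}) <= L_c(z_{k-1};p_{k-1}) - (1 - sigma^2) |r_k|^2 / (2 lambda)].
   The theorem is the sum of the two inequalities. *)

Section InnerProduct.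
Context {R : realType} {l : nat}.
Implicit Types (a u v w : 'cV[R]_l) (t : R).

Lemma dotvE u v : dotv u v = \sum_i u i 0 * v i 0.
Proof. by rewrite /dotv mxE; apply: eq_bigr => i _; rewrite mxE. Qed.

Lemma dotvC u v : dotv u v = dotv v u.
Proof. by rewrite !dotvE; apply: eq_bigr => i _; rewrite mulrC. Qed.

Lemma dotvDl u w v : dotv (u + w) v = dotv u v + dotv w v.
Proof. by rewrite !dotvE -big_split; apply: eq_bigr => i _; rewrite mxE mulrDl. Qed.

Lemma dotvZl t u v : dotv (t *: u) v = t * dotv u v.
Proof. by rewrite !dotvE mulr_sumr; apply: eq_bigr => i _; rewrite mxE mulrA. Qed.

Lemma dotvNl u v : dotv (- u) v = - dotv u v.
Proof. by rewrite -scaleN1r dotvZl mulN1r. Qed.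

Lemma dotvBl u w v : dotv (u - w) v = dotv u v - dotv w v.
Proof. by rewrite dotvDl dotvNl. Qed.

Lemma dotvDr u w v : dotv v (u + w) = dotv v u + dotv v w.
Proof. by rewrite dotvC dotvDl !(dotvC v). Qed.

Lemma dotvZr t u v : dotv v (t *: u) = t * dotv v u.
Proof. by rewrite dotvC dotvZl dotvC. Qed.

Lemma dotvNr u v : dotv v (- u) = - dotv v u.
Proof. by rewrite dotvC dotvNl dotvC. Qed.

Lemma dotvBr u w v : dotv v (u - w) = dotv v u - dotv v w.
Proof. by rewrite dotvDr dotvNr. Qed.

Lemma dotv_ge0 u : 0 <= dotv u u.
Proof. by rewrite dotvE; apply: sumr_ge0 => i _; rewrite -expr2 sqr_ge0. Qed.

Lemma dotv_eq0 u : dotv u u = 0 -> u = 0.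
Proof.
rewrite dotvE => /eqP; rewrite psumr_eq0 => [/allP u0|i _]; last by rewrite -expr2 sqr_ge0.
apply/matrixP => i j; rewrite (ord1 j) mxE.
by move/implyP: (u0 i (mem_index_enum i)) => /(_ isT); rewrite mulf_eq0 orbb => /eqP.
Qed.

Lemma dotv_expand a u t :
  dotv (a + t *: u) (a + t *: u) = dotv a a + 2 * t * dotv a u + t ^+ 2 * dotv u u.
Proof. by rewrite !(dotvDl, dotvDr, dotvZl, dotvZr) (dotvC u a); ring. Qed.

Lemma norm2_ge0 u : 0 <= norm2 u.
Proof. exact: sqrtr_ge0. Qed.

Lemma norm2_sq u : norm2 u ^+ 2 = dotv u u.
Proof. by rewrite /norm2 sqr_sqrtr // dotv_ge0. Qed.

Lemma norm2_le u v : (norm2 u <= norm2 v) = (dotv u u <= dotv v v).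
Proof. by rewrite /norm2 ler_sqrt ?dotv_ge0. Qed.

End InnerProduct.

Section NearestPoint.
Context {R : realType} {l : nat}.

(* Transposition is continuous (it preserves the max-norm of matrices). *)
Lemma trmx_continuous : continuous (fun v : 'rV[R]_l => v^T).
Proof.
move=> v; apply/(@cvgrPdist_lt _ _ _ (nbhs v)) => e e0; near=> w.
have vw : `|v - w| < e by near: w; exact: cvgr_dist_lt.
apply: le_lt_trans vw; rewrite -linearB /= [leLHS]/Num.Def.normr/= mx_normrE.
apply: bigmax_le => //= -[i j] _; rewrite mxE [leRHS]/Num.Def.normr/= mx_normrE.
exact: (le_bigmax _ _ (j, i)).
Unshelve. all: by end_near. Qed.

(* Boxes of column vectors are compact: they are transposes of boxes of rows. *)
Lemma cV_box_compact (C : 'I_l -> R) :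
  compact [set u : 'cV[R]_l | forall i, `|u i 0| <= C i].
Proof.
pose B := [set v : 'rV[R]_l | forall i, (`[- C i, C i])%classic (v ord0 i)].
have cB : compact B.
  exact: (@rV_compact _ _ (fun i => `[- C i, C i]%classic) (fun i => @segment_compact R _ _)).
have -> : [set u : 'cV[R]_l | forall i, `|u i 0| <= C i] = (fun v => v^T) @` B.
  apply/seteqP; split => [u uC|_ [v vB <-] i].
    by exists u^T; [move=> i; rewrite /= in_itv /= mxE -ler_norml | rewrite trmxK].
  by have := vB i; rewrite /= in_itv /= mxE -ler_norml.
exact: (continuous_compact (continuous_subspaceT trmx_continuous) cB).
Qed.

Lemma sqnorm_shift_continuous (y : 'cV[R]_l) :
  continuous (fun u : 'cV[R]_l => dotv (y + u) (y + u)).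
Proof.
have -> : (fun u : 'cV[R]_l => dotv (y + u) (y + u)) =
    (fun u => \sum_(i < l) (y i 0 + u i 0) * (y i 0 + u i 0)).
  by apply: funext => u; rewrite dotvE; apply: eq_bigr => i _; rewrite mxE.
apply: continuous_big => [|i _]; first exact: add_continuous.
have yu : continuous (fun u : 'cV[R]_l => y i 0 + u i 0).
  by move=> u; apply: (@cvgD _ _ _ (nbhs u)); [exact: cvg_cst | exact: coord_continuous].
by move=> u; exact: (@cvgM _ _ (nbhs u) _ _ _ _ _ (yu u) (yu u)).
Qed.

Lemma coord_sq_le (u : 'cV[R]_l) i : u i 0 * u i 0 <= dotv u u.
Proof.
rewrite dotvE (bigD1 i) //= ler_wpDr //.
by apply: sumr_ge0 => j _; rewrite -expr2 sqr_ge0.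
Qed.

(* Existence of a nearest point: a nonempty closed set contains a point
   [u0] minimizing [norm2 (y + u)]; we minimize over a compact sublevel set. *)
Lemma closed_nearest {S : set 'cV[R]_l} (y : 'cV[R]_l) : closed S -> S !=set0 ->
  exists2 u0, S u0 & forall u, S u -> norm2 (y + u0) <= norm2 (y + u).
Proof.
move=> clS [x0 Sx0].
pose Q u := dotv (y + u) (y + u); pose M := Q x0.
pose S' := S `&` (Q @^-1` [set x | x <= M]).
have clS' : closed S'.
  by apply: closedI => //; apply: (continuous_closedP Q).1; [exact: sqnorm_shift_continuous | exact: closed_le].
have cS' : compact S'.
  apply: (subclosed_compact clS' (cV_box_compact (fun i => 1 + M + `|y i 0|))).
  move=> u [_ Qu] i; set a := (y + u) i 0.
  have aM : a * a <= M by apply: le_trans (coord_sq_le _ _) Qu.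
  have a1M : `|a| <= 1 + M.
    have : `|a| <= 1 + a * a by case: (lerP 0 a) => a0; [rewrite ger0_norm | rewrite ltr0_norm]; nra.
    by move/le_trans; apply; rewrite lerD2l.
  have -> : u i 0 = a - y i 0 by rewrite /a mxE; ring.
  by apply: le_trans (ler_normB _ _) _; rewrite lerD2r.
have S'0 : S' !=set0 by exists x0; split => //; rewrite /= /M.
have [u0 /[1!inE] -[Su0 Qu0] u0min] :=
  compact_EVT_min S'0 cS' (continuous_subspaceT (sqnorm_shift_continuous y)).
exists u0 => // u Su; rewrite norm2_le; case: (lerP (Q u) M) => QuM.
  by apply: u0min; rewrite inE.
exact: le_trans Qu0 (ltW QuM).
Qed.
End NearestPoint.

(* A quadratic [2 t X + t^2 Y] that is nonnegative for small [t >= 0] has a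
   nonnegative slope [X]; this turns first-order optimality into inequalities. *)
Lemma quadratic_slope_ge0 {R : realFieldType} {X Y : R} : 0 <= Y ->
  (forall t, 0 <= t <= 1 -> 0 <= 2 * t * X + t ^+ 2 * Y) -> 0 <= X.
Proof.
move=> Y0 q_ge0; case: (lerP 0 X) => // X0.
pose t := - X / (Y - X + 1).
have d0 : 0 < Y - X + 1 by lra.
have t0 : 0 < t by rewrite divr_gt0 // oppr_gt0.
have t1 : t <= 1 by rewrite ler_pdivrMr // mul1r; lra.
have tY : t * Y <= - X by rewrite mulrAC ler_pdivrMr //; nra.
by have := q_ge0 t; rewrite ltW //= t1 => /(_ isT); nra.
Qed.

Section Distance.
Context {R : realType} {l : nat}.
Implicit Types (S : set 'cV[R]_l) (w x : 'cV[R]_l).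

Lemma distv_le S w x : S x -> distv w S <= norm2 (w - x).
Proof.
move=> Sx; apply: ge_inf; last by exists x.
by exists 0 => _ [u _ <-]; exact: norm2_ge0.
Qed.

Lemma le_distv S w (m : R) : S !=set0 ->
  (forall x, S x -> m <= norm2 (w - x)) -> m <= distv w S.
Proof.
move=> [x0 Sx0] mS; apply: lb_le_inf; first by exists (norm2 (w - x0)), x0.
by move=> _ [x Sx <-]; exact: mS.
Qed.

Lemma distv_ge0 {S} w : S !=set0 -> 0 <= distv w S.
Proof. by move=> S0; apply: le_distv => // x _; exact: norm2_ge0. Qed.

(* In a convex set, a point nearest to [y] is unique (parallelogram law). *)
Lemma nearest_unique {S} {y a b : 'cV[R]_l} : convex_setv S ->
  S a -> (forall q, S q -> norm2 (y - a) <= norm2 (y - q)) ->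
  S b -> (forall q, S q -> norm2 (y - b) <= norm2 (y - q)) -> a = b.
Proof.
move=> cvS Sa amin Sb bmin.
have Sm : S (2^-1 *: a + 2^-1 *: b).
  have -> : (2^-1 : R) *: b = (1 - 2^-1) *: b by congr (_ *: _); field.
  by apply: cvS => //; apply/andP; split; lra.
have yb : y - b = (y - a) + 1 *: (a - b) by rewrite scale1r addrA subrK.
have ym : y - (2^-1 *: a + 2^-1 *: b) = (y - a) + 2^-1 *: (a - b).
  by apply/matrixP => i j; rewrite !mxE; field.
move: (amin _ Sb) (bmin _ Sa) (amin _ Sm); rewrite !norm2_le ym yb !dotv_expand.
have := dotv_ge0 (a - b); set d := dotv (a - b) (a - b) => d0 ab ba am.
have /dotv_eq0/eqP : d = 0 by nra.
by rewrite subr_eq0 => /eqP.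
Qed.

End Distance.

Section DualConeProjection.
Context {R : realType} {l : nat}.
Context {K : set 'cV[R]_l}.
Hypothesis hK : closed_convex_cone K.
Implicit Types (u w y q : 'cV[R]_l).

Lemma cone_add {u w} : K u -> K w -> K (u + w).
Proof.
case: hK => _ [_ [cvK scK]] Ku Kw.
have := cvK _ _ 2^-1 (scK 2 _ (ler0n _ 2) Ku) (scK 2 _ (ler0n _ 2) Kw).
have -> : (1 - 2^-1 : R) = 2^-1 by field.
by rewrite !scalerA mulVf ?scale1r //; apply; apply/andP; split; lra.
Qed.

(* The dual cone is convex (an intersection of half-spaces). *)
Lemma dual_cone_convex : convex_setv (dual_cone K).
Proof.
move=> a b t Ka Kb /andP[t0 t1] x Kx; rewrite dotvDl !dotvZl.
by apply: addr_ge0; apply: mulr_ge0; rewrite ?subr_ge0 ?Ka ?Kb.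
Qed.

Lemma cone_nearest_optimality {y u0} : K u0 ->
  (forall u, K u -> norm2 (y + u0) <= norm2 (y + u)) ->
  dual_cone K (y + u0) /\ dotv (y + u0) u0 = 0.
Proof.
have [_ [_ [_ scK]]] := hK; move=> Ku0 u0min; set q0 := y + u0.
have var u : K u -> 0 <= dotv q0 u.
  move=> Ku; apply: (quadratic_slope_ge0 (dotv_ge0 u)) => t /andP[t0 _].
  have := u0min _ (cone_add Ku0 (scK _ _ t0 Ku)).
  by rewrite norm2_le addrA dotv_expand -/q0; lra.
split=> //; apply/eqP; rewrite eq_le var // andbT -oppr_ge0 -dotvNr.
apply: (quadratic_slope_ge0 (dotv_ge0 (- u0))) => t /andP[_ t1].
have t1' : 0 <= 1 - t by lra.
have := u0min _ (scK (1 - t) _ t1' Ku0).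
have -> : y + (1 - t) *: u0 = q0 + t *: - u0 by rewrite scalerBl scale1r scalerN addrA.
by rewrite norm2_le dotv_expand !dotvNl !dotvNr opprK -/q0; lra.
Qed.

Lemma moreau_dual_cone y : let b := proj_set (dual_cone K) y in
  dual_cone K b /\ K (b - y) /\ dotv (y - b) b = 0.
Proof.
have [K0 [clK _]] := hK.
have [u0 Ku0 u0min] := closed_nearest y clK K0.
have [q0K q0u0] := cone_nearest_optimality Ku0 u0min.
have yq0 : y - (y + u0) = - u0 by rewrite opprD addrA subrr add0r.
have q0min q : dual_cone K q -> norm2 (y - (y + u0)) <= norm2 (y - q).
  move=> Kq; have -> : y - q = y - (y + u0) + 1 *: (y + u0 - q).
    by rewrite scale1r addrA subrK.
  rewrite norm2_le dotv_expand yq0; have := Kq _ Ku0; have := dotv_ge0 (y + u0 - q).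
  by rewrite !dotvNl !dotvBr (dotvC u0 (y + u0)) (dotvC u0 q) q0u0; lra.
set b := proj_set _ y.
have [Kb bmin] : dual_cone K b /\ forall q, dual_cone K q -> norm2 (y - b) <= norm2 (y - q).
  exact: (xgetI (P := [set x | dual_cone K x /\ forall q, dual_cone K q ->
    norm2 (y - x) <= norm2 (y - q)]) 0 (conj q0K q0min)).
have -> : b = y + u0 := nearest_unique dual_cone_convex Kb bmin q0K q0min.
split=> //; split; first by rewrite addrC addKr.
by rewrite yq0 dotvNl dotvC q0u0 oppr0.
Qed.

Lemma proj_dual_le_dist y :
  norm2 (proj_set (dual_cone K) y) <= distv y (neg_set K).
Proof.
have [[x Kx] _] := hK; have [Kb [Kby orth]] := moreau_dual_cone y.
set b := proj_set _ y in Kb Kby orth *.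
apply: le_distv => [|_ [u Ku <-]]; first by exists (- x), x.
have -> : y - - u = b + 1 *: (y - b + u).
  by rewrite scale1r opprK addrA addrCA subrr addr0.
rewrite norm2_le dotv_expand dotvDr (dotvC b (y - b)) orth.
by have := Kb _ Ku; have := dotv_ge0 (y - b + u); lra.
Qed.

Lemma Lag_multiplier_update {n} (f h : 'cV[R]_n -> R) {g : 'cV[R]_n -> 'cV[R]_l}
    {c : R} {z : 'cV[R]_n} {p p'} : 0 < c -> p' = proj_set (dual_cone K) (p + c *: g z) ->
  Lag K f h g c z p' <= Lag K f h g c z p + c^-1 * norm2 (p' - p) ^+ 2.
Proof.
move=> c0 p'E; have [Kp' [Kp'y _]] := moreau_dual_cone (p + c *: g z).
rewrite -p'E in Kp' Kp'y.
have D1 : distv (p' + c *: g z) (neg_set K) <= norm2 (p' + 1 *: (p' - p)).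
  have -> : p' + 1 *: (p' - p) = p' + c *: g z - - (p' - (p + c *: g z)).
    by rewrite scale1r opprK; apply/matrixP => i j; rewrite !mxE; ring.
  by apply: distv_le; exists (p' - (p + c *: g z)).
have D2 := proj_dual_le_dist (p + c *: g z); rewrite -p'E in D2.
have [[x Kx] _] := hK.
have nK0 : neg_set K !=set0 by exists (- x), x.
have D1sq := lerXn2r 2 (distv_ge0 _ nK0) (norm2_ge0 _) D1.
have D2sq := lerXn2r 2 (norm2_ge0 _) (le_trans (norm2_ge0 _) D2) D2.
rewrite /Lag !norm2_sq dotv_expand in D1sq D2sq *.
have e : dotv (p' - p) (p' - p) = dotv p' p' - 2 * dotv p p' + dotv p p.
  by rewrite !(dotvBl, dotvBr) (dotvC p' p); ring.
rewrite expr1n !mul1r mulr1 dotvBr (dotvC p' p) e in D1sq; rewrite e.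
have -> : c^-1 = (2 * c)^-1 * 2 by rewrite invfM mulrAC mulVf // mul1r.
rewrite -!addrA !lerD2l -!mulrA -mulrDr.
by apply: ler_wpM2l; [rewrite invr_ge0 mulr_ge0 // ltW | lra].
Qed.

End DualConeProjection.

Lemma inexact_prox_descent {R : realType} {n : nat} {D : set 'cV[R]_n}
    {phi : 'cV[R]_n -> R} {lambda sigma eps : R} {z0 z1 v : 'cV[R]_n} :
  0 < lambda -> D z0 ->
  esubdiff D (fun u => lambda * phi u + 2^-1 * norm2 (u - z0) ^+ 2) eps z1 v ->
  norm2 v ^+ 2 + 2 * eps <= sigma ^+ 2 * norm2 (v + z0 - z1) ^+ 2 ->
  phi z1 <= phi z0 - (1 - sigma ^+ 2) / (2 * lambda) * norm2 (v + z0 - z1) ^+ 2.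
Proof.
move=> lam0 Dz0 [_ vsub]; have := vsub _ Dz0.
set r := v + z0 - z1; set s := z0 - z1.
have rE : norm2 r ^+ 2 = dotv v v + 2 * dotv v s + dotv s s.
  have -> : r = v + 1 *: s by rewrite scale1r addrA.
  by rewrite norm2_sq dotv_expand expr1n mulr1 mul1r.
have -> : z1 - z0 = - s by rewrite opprB.
rewrite rE subrr !norm2_sq dotvNl dotvNr opprK (_ : dotv 0 0 = 0) ?mulr0; last first.
  by rewrite dotvE big1 // => i _; rewrite mxE mul0r.
set R2 := dotv v v + _ + _; set sig2 := sigma ^+ 2 => descent small.
have key : lambda * phi z1 <= lambda * phi z0 - 2^-1 * R2 + 2^-1 * (sig2 * R2).
  have R2E : R2 = dotv v v + 2 * dotv v s + dotv s s by [].
  lra.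
rewrite -(ler_pM2l lam0) [leRHS](_ : _ = lambda * phi z0 - 2^-1 * R2 + 2^-1 * (sig2 * R2)) //.
by field; rewrite gt_eqF.
Qed.

(* Supremum of a set of nonnegative reals (it is [0] when undefined). *)
Lemma sup_ge0 {R : realType} (S : set R) : (forall x, S x -> 0 <= x) -> 0 <= sup S.
Proof.
move=> S_ge0; have [supS|noSup] := pselect (has_sup S); last by rewrite sup_out.
have [[x Sx] _] := supS.
exact: le_trans (S_ge0 x Sx) (sup_upper_bound supS Sx).
Qed.

Lemma doubling_pos {R : realType} {c : nat -> R} : 0 < c 1%N ->
  (forall j, (1 <= j)%N -> c j.+1 = c j \/ c j.+1 = 2 * c j) ->
  forall j, (1 <= j)%N -> 0 < c j.
Proof.
move=> c1 cupd; elim=> [//|[_ _ //|j IH _]].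
by case: (cupd j.+1 isT) => ->; rewrite ?mulr_gt0 ?IH.
Qed.

Lemma scaled_tolerance_le {R : realType} (sigma L : R) : 1 <= L ->
  (sigma / Num.sqrt L) ^+ 2 <= sigma ^+ 2.
Proof.
move=> L1; have L0 : 0 < L by lra.
rewrite expr_div_n sqr_sqrtr; last exact: ltW.
by rewrite ler_pdivrMr //; have := sqr_ge0 sigma; nra.
Qed.

Theorem lemma4p5
  (R : realType) (n l : nat)
  (K : set 'cV[R]_l)
  (h f : 'cV[R]_n -> R) (H : set 'cV[R]_n)
  (g : 'cV[R]_n -> 'cV[R]_l)
  (df : 'cV[R]_n -> 'cV[R]_n) (dg : 'cV[R]_n -> 'M[R]_(n, l))
  (K_h m_f L_f L_g : R)
  (* the cone *)
  (hK : closed_convex_cone K)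
  (* (B1) *)
  (hH0 : H !=set0) (hHc : compact H) (hHconv : convex_setv H)
  (hhconv : forall x y (t : R), H x -> H y -> 0 <= t <= 1 ->
      h (t *: x + (1 - t) *: y) <= t * h x + (1 - t) * h y)
  (hhlsc : lower_semicontinuous (ext_on H h))
  (hKh : 0 <= K_h)
  (hhlip : forall x y, H x -> H y -> `|h x - h y| <= K_h * norm2 (x - y))
  (* (B2) *)
  (hfdiff : exists2 U : set 'cV[R]_n, open U & H `<=` U /\
      forall z, U z -> differentiable f z /\ forall u, 'd f z u = dotv (df z) u)
  (hmf : 0 < m_f) (hLf : 0 < L_f)
  (hfwc : forall z z', H z -> H z' ->
      f z' - f z - dotv (df z) (z' - z) >= - (m_f / 2) * (norm2 (z' - z)) ^+ 2)
  (hflip : forall z z', H z -> H z' -> norm2 (df z' - df z) <= L_f * norm2 (z' - z))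
  (* (B3) *)
  (hgconv : forall z z' (t : R), 0 <= t <= 1 ->
      cone_le K (g (t *: z' + (1 - t) *: z)) (t *: g z' + (1 - t) *: g z))
  (hgdiff : forall z, differentiable g z /\ forall u, 'd g z u = (dg z)^T *m u)
  (hLg : 0 <= L_g)
  (hglip : forall z z', opnorm (dg z' - dg z) <= L_g * norm2 (z' - z))
  (* method parameters *)
  (lambda sigma : R)
  (hlam : 0 < lambda <= (2 * m_f)^-1)
  (hsig : 0 < sigma <= (Num.sqrt 2)^-1)
  (* iterates of NL-IAPIAL *)
  (z v : nat -> 'cV[R]_n) (eps : nat -> R) (p : nat -> 'cV[R]_l) (c : nat -> R)
  (k : nat) (hk : (1 <= k)%N)
  (hz0 : H (z 0%N))
  (hc1 : 0 < c 1%N)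
  (hcupd : forall j, (1 <= j)%N -> c j.+1 = c j \/ c j.+1 = 2 * c j)
  (* step (1) at every iteration j = 1..k *)
  (hstep1 : forall j, (1 <= j <= k)%N ->
      let Bg0 := sup [set norm2 (g x) | x in H] in
      let Bg1 := sup [set opnorm (dg x) | x in H] in
      let Lam := L_f + L_g * norm2 (p j.-1) + c j * (Bg0 * L_g + Bg1 ^+ 2) in
      let Lpsi := lambda * Lam + 1 in
      let sig := sigma / Num.sqrt Lpsi in
      0 <= eps j /\
      esubdiff H (fun u => lambda * Lag K f h g (c j) u (p j.-1)
                           + 2^-1 * (norm2 (u - z j.-1)) ^+ 2)
               (eps j) (z j) (v j) /\
      (norm2 (v j)) ^+ 2 + 2 * eps j <= sig ^+ 2 * (norm2 (v j + z j.-1 - z j)) ^+ 2)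
  (* step (3) at every iteration j = 1..k *)
  (hstep3 : forall j, (1 <= j <= k)%N ->
      p j = proj_set (dual_cone K) (p j.-1 + c j *: g (z j))) :
  let r := v k + z k.-1 - z k in
  Lag K f h g (c k) (z k) (p k)
    <= Lag K f h g (c k) (z k) (p k.-1) + (c k)^-1 * (norm2 (p k - p k.-1)) ^+ 2 /\
  Lag K f h g (c k) (z k) (p k)
    <= Lag K f h g (c k) (z k.-1) (p k.-1)
       - ((1 - sigma ^+ 2) / (2 * lambda)) * (norm2 r) ^+ 2
       + (c k)^-1 * (norm2 (p k - p k.-1)) ^+ 2.
Proof.
move=> r; have lam0 : 0 < lambda by case/andP: hlam.
have kk : (1 <= k <= k)%N by rewrite hk leqnn.
have ck := doubling_pos hc1 hcupd _ hk.
have update := Lag_multiplier_update hK f h ck (hstep3 k kk); split=> //.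
have Hzprev : H (z k.-1).
  case: (posnP k.-1) => [-> //|pos].
  by have [_ [[]]] := hstep1 k.-1 (introT andP (conj pos (leq_pred k))).
have [_ [sub tol]] := hstep1 k kk; move: sub tol; cbv zeta.
set Bg0 := sup _; set Bg1 := sup _; set Lpsi := lambda * _ + 1 => sub tol.
have Lpsi1 : 1 <= Lpsi.
  have Bg0_ge0 : 0 <= Bg0 by apply: sup_ge0 => _ [x _ <-]; exact: norm2_ge0.
  rewrite lerDr; apply: mulr_ge0 (ltW lam0) _.
  apply: addr_ge0; [apply: addr_ge0 | apply: mulr_ge0 (ltW ck) _].
  - exact: ltW.
  - exact: mulr_ge0 hLg (norm2_ge0 _).
  - exact: addr_ge0 (mulr_ge0 Bg0_ge0 hLg) (sqr_ge0 _).
have tol' := le_trans tol (ler_wpM2r (sqr_ge0 _) (scaled_tolerance_le sigma Lpsi Lpsi1)).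
have descent := inexact_prox_descent lam0 Hzprev sub tol'.
rewrite -/r in descent; lra.
Qed.
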